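(* Let $\rho$ be a finite intensity on $\Omega=B^d_+\times B^d_+$ with total mass $\Lambda>0$ such that $\mu=\rho/\Lambda$ is absolutely continuous with respect to Lebesgue measure on $\mathbb{R}^{2d}$ and neither the green nor the red marginal of $\mu$ is supported on a proper linear subspace of $\mathbb{R}^d$. Let $\phi:([0,1],\mathrm{Leb})\to(\Omega,\mu)$ be a measure-preserving Borel isomorphism (a bijection modulo null sets), and let $W(u,v)=K(\phi(u),\phi(v))$. Then $W$ is almost twin-free.
   Context: $B^d_+=\{x\in\mathbb{R}^d:x_k\ge0\ \forall k,\ \|x\|\le1\}$, $\Omega=B^d_+\times B^d_+$; $s=(\vec g_s,\vec r_s)\in\Omega$ and $K(s,t)=\vec g_s\cdot\vec r_t$. Green/red marginals are pushforwards of $\mu$ under $s\mapsto\vec g_s$, $s\mapsto\vec r_s$. For a kernel $W:[0,1]^2\to[0,1]$, two labels $u\neq u'$ are twins if $W(u,t)=W(u',t)$ for a.e. $t$ and $W(t,u)=W(t,u')$ for a.e. $t$. $W$ is almost twin-free if there is a Lebesgue-null set $N\subset[0,1]$ such that no two distinct $u,u'\in[0,1]\setminus N$ are twins. *)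

From HB Require Import structures.
From mathcomp Require Import all_boot all_order all_algebra.
From mathcomp Require Import all_classical all_reals all_analysis.
Unset Printing Implicit Defensive.
Import Order.TTheory GRing.Theory Num.Theory.
Local Open Scope classical_set_scope.
Local Open Scope ring_scope.

(* Points of R^d are d-tuples (tuples carry the product = Borel sigma-algebra).
   A point s of R^d x R^d = R^(2d) is a pair (g_s, r_s). *)
Definition pt (R : realType) (d : nat) := (d.-tuple R * d.-tuple R)%type.

Definition dotp {R : realType} {d : nat} (x y : d.-tuple R) : R :=
  \sum_(i < d) tnth x i * tnth y i.

Definition Bplus (R : realType) (d : nat) : set (d.-tuple R) :=
  [set x | (forall i : 'I_d, 0 <= tnth x i) /\ dotp x x <= 1].

Definition Omega (R : realType) (d : nat) : set (pt R d) :=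
  Bplus R d `*` Bplus R d.

Definition Kern {R : realType} {d : nat} (s t : pt R d) : R := dotp s.1 t.2.

Definition rowv {R : realType} {d : nat} (x : d.-tuple R) : 'rV[R]_d :=
  \row_(i < d) tnth x i.

(* A linear subspace of R^d is the row space of a matrix M : 'M_d; it is proper
   iff \rank M < d. *)
Definition supported_on_subspace {R : realType} {d : nat}
    (nu : set (d.-tuple R) -> \bar R) (M : 'M[R]_d) : Prop :=
  nu [set x | ~~ (rowv x <= M)%MS] = 0%E.

(* Lebesgue-null subsets of R^d x R^d = R^(2d): for every eps > 0 they can be
   covered by countably many closed boxes of total volume <= eps. *)
Definition box {R : realType} {d : nat} (a b : pt R d) : set (pt R d) :=
  [set x | forall i : 'I_d,
     (tnth a.1 i <= tnth x.1 i <= tnth b.1 i) /\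
     (tnth a.2 i <= tnth x.2 i <= tnth b.2 i)].

Definition box_vol {R : realType} {d : nat} (a b : pt R d) : R :=
  (\prod_(i < d) (tnth b.1 i - tnth a.1 i)) *
  (\prod_(i < d) (tnth b.2 i - tnth a.2 i)).

Definition lebesgue_null2 {R : realType} {d : nat} (A : set (pt R d)) : Prop :=
  forall eps : R, 0 < eps ->
  exists a b : nat -> pt R d,
    (forall n (i : 'I_d), tnth (a n).1 i <= tnth (b n).1 i /\
                          tnth (a n).2 i <= tnth (b n).2 i) /\
    A `<=` \bigcup_n box (a n) (b n) /\
    (forall N, \sum_(n < N) box_vol (a n) (b n) <= eps).


Definition twins {R : realType} (W : R -> R -> R) (u u' : R) : Prop :=
  u <> u' /\
  {ae (@lebesgue_measure R), forall t, `[0, 1]%classic t -> W u t = W u' t} /\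
  {ae (@lebesgue_measure R), forall t, `[0, 1]%classic t -> W t u = W t u'}.

Definition almost_twin_free {R : realType} (W : R -> R -> R) : Prop :=
  exists N : set R, (@lebesgue_measure R).-negligible N /\
    forall u u', `[0, 1]%classic u -> `[0, 1]%classic u' -> ~ N u -> ~ N u' ->
      u <> u' -> ~ twins W u u'.

From HB Require Import structures.
From mathcomp Require Import all_boot all_order all_algebra.
From mathcomp Require Import all_classical all_reals all_analysis.
From mathcomp Require Import measurable_realfun.
Import Order.TTheory GRing.Theory Num.Theory.
Local Open Scope classical_set_scope.
Local Open Scope ring_scope.

(* If u and u' are twins, then for a.e. t the green vectors of phi u and
   phi u' have the same dot product with the red vector of phi t.  Since phi
   is measure preserving, the red marginal of mu is then carried by the
   hyperplane orthogonal to their difference, which the nondegeneracy of the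
   red marginal forbids unless the difference is 0.  Symmetrically the red
   vectors agree, so phi u = phi u', and injectivity of phi off a null set
   gives u = u'. *)

Lemma dotpC {R : realType} {d : nat} (x y : d.-tuple R) : dotp x y = dotp y x.
Proof. by apply: eq_bigr => i _; rewrite mulrC. Qed.

Lemma measurable_dotp {R : realType} {d : nat} (c : d.-tuple R) :
  measurable_fun [set: d.-tuple R] (dotp c).
Proof.
apply: measurable_sum => i; apply: measurable_funM; first exact: measurable_cst.
exact: measurable_tnth.
Qed.

Lemma measurable_dotp_neq {R : realType} {d : nat} (g g' : d.-tuple R) :
  measurable [set x : d.-tuple R | dotp g x != dotp g' x].
Proof.
have mf : measurable_fun [set: d.-tuple R] (fun x => dotp g x - dotp g' x).
  by apply: measurable_funB; exact: measurable_dotp.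
rewrite (_ : [set x | _] = (fun x => dotp g x - dotp g' x) @^-1` [set~ 0]).
  by rewrite -[_ @^-1` _]setTI; apply: mf => //; exact: measurableC.
by apply/seteqP; split => x /=; rewrite -subr_eq0 => /eqP.
Qed.

Lemma not_supported_dotp_inj {R : realType} {d : nat}
    {nu : set (d.-tuple R) -> \bar R} {g g' : d.-tuple R} :
  (forall M : 'M[R]_d, (\rank M < d)%N -> ~ supported_on_subspace nu M) ->
  nu [set x | dotp g x != dotp g' x] = 0%E -> g = g'.
Proof.
move=> nondeg null; apply: contrapT => neq.
pose v : 'cV[R]_d := \col_i (tnth g i - tnth g' i).
have v_neq0 : v != 0.
  apply: contra_notN neq => /eqP v0; apply: eq_from_tnth => i.
  by move/matrixP/(_ i 0): v0; rewrite !mxE => /eqP; rewrite subr_eq0 => /eqP.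
have rank_ker : (\rank (kermx v) < d)%N.
  have v_rank_gt0 : (0 < \rank v)%N by rewrite lt0n mxrank_eq0.
  rewrite mxrank_ker ltn_subrL v_rank_gt0.
  exact: leq_trans v_rank_gt0 (rank_leq_row v).
have rowv_mul_v x : rowv x *m v = (dotp g x - dotp g' x)%:M.
  apply/matrixP => i j; rewrite !ord1 !mxE /dotp -sumrB /=.
  by apply: eq_bigr => k _; rewrite !mxE mulrBr !(mulrC (tnth x k)).
apply: (nondeg _ rank_ker); rewrite /supported_on_subspace -null; congr nu.
apply/seteqP; split => x /=;
  by rewrite sub_kermx rowv_mul_v -scalemx1 scaler_eq0 oner_eq0 orbF subr_eq0.
Qed.

Section MeasurePreserving.
Context {R : realType} {d : nat} {mu : probability (pt R d) R}.
Context {D : set R} {phi : R -> pt R d}.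
Hypotheses (mD : measurable D) (mphi : measurable_fun D phi).
Hypothesis phi_preserving : forall B, measurable B ->
  (@lebesgue_measure R) (D `&` phi @^-1` B) = mu B.

Lemma measure_preserving_null (P : R -> Prop) (B : set (pt R d)) :
  measurable B -> {ae (@lebesgue_measure R), forall t, P t} ->
  (forall t, D t -> B (phi t) -> ~ P t) -> mu B = 0%E.
Proof.
move=> mB [N [mN N0 notPN]] BnotP; rewrite -phi_preserving //.
apply: (subset_measure0 _ mN _ N0); first exact: mphi.
by move=> t [Dt Bt]; apply: notPN; exact: BnotP.
Qed.

Lemma measure_preserving_dotp_inj {f : pt R d -> d.-tuple R}
    {g g' : d.-tuple R} (P : R -> Prop) : measurable_fun setT f ->
  (forall M : 'M[R]_d, (\rank M < d)%N ->
     ~ supported_on_subspace (pushforward mu f) M) ->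
  {ae (@lebesgue_measure R), forall t, P t} ->
  (forall t, D t -> P t -> dotp g (f (phi t)) = dotp g' (f (phi t))) ->
  g = g'.
Proof.
move=> mf nondeg aeP Peq; apply: (not_supported_dotp_inj nondeg).
apply: measure_preserving_null aeP _ => [|t Dt /eqP neq Pt]; last exact/neq/Peq.
by rewrite -[_ @^-1` _]setTI; apply: mf => //; exact: measurable_dotp_neq.
Qed.

End MeasurePreserving.

Theorem mainTheorem8 (R : realType) (d : nat)
  (rho : {finite_measure set (pt R d) -> \bar R}) (Lambda : R)
  (mu : probability (pt R d) R) (phi : R -> pt R d) :
  (* rho is a finite intensity on Omega with total mass Lambda > 0 *)
  rho (~` Omega R d) = 0%E ->
  rho setT = Lambda%:E -> 0 < Lambda ->
  (* mu = rho / Lambda *)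
  (forall A, measurable A -> mu A = (rho A * (Lambda^-1)%:E)%E) ->
  (* mu is absolutely continuous w.r.t. Lebesgue measure on R^(2d) *)
  (forall A, measurable A -> lebesgue_null2 A -> mu A = 0%E) ->
  (* neither marginal is supported on a proper linear subspace of R^d *)
  (forall M : 'M[R]_d, (\rank M < d)%N ->
     ~ supported_on_subspace (pushforward mu fst) M) ->
  (forall M : 'M[R]_d, (\rank M < d)%N ->
     ~ supported_on_subspace (pushforward mu snd) M) ->
  (* phi : ([0,1], Leb) -> (Omega, mu) is a measure-preserving Borel
     isomorphism, i.e. a bijection modulo null sets *)
  (exists (N0 : set R) (M0 : set (pt R d)),
     [/\ measurable N0, (@lebesgue_measure R) N0 = 0%E,
         measurable M0, mu M0 = 0%E &
     let D := `[0, 1]%classic `\` N0 in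
     let E := Omega R d `\` M0 in
     [/\ set_bij D E phi,
         measurable_fun D phi,
         (exists psi : pt R d -> R, measurable_fun E psi /\
            forall y, E y -> D (psi y) /\ phi (psi y) = y) &
         forall B, measurable B ->
           (@lebesgue_measure R) (D `&` phi @^-1` B) = mu B]]) ->
  almost_twin_free (fun u v => Kern (phi u) (phi v)).
Proof.
move=> _ _ _ _ _ green_nondeg red_nondeg [N0 [M0 [mN0 N00 _ _ /=]]].
set D := `[0, 1]%classic `\` N0 => -[[_ phi_inj _] mphi _ phi_preserving].
have mD : measurable D by apply: measurableD => //; exact: measurable_itv.
exists N0; split; first by exists N0; split.
move=> u u' u01 u'01 Nu Nu' neq [_ [ae_right ae_left]].
apply/neq/phi_inj; rewrite ?inE //.
have green_eq : (phi u).1 = (phi u').1.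
  apply: (measure_preserving_dotp_inj mD mphi phi_preserving _
            measurable_snd red_nondeg ae_right).
  by move=> t [t01 _]; apply.
have red_eq : (phi u).2 = (phi u').2.
  apply: (measure_preserving_dotp_inj mD mphi phi_preserving _
            measurable_fst green_nondeg ae_left).
  by move=> t [t01 _] /(_ t01); rewrite /Kern !(dotpC (phi t).1).
by rewrite [phi u]surjective_pairing [phi u']surjective_pairing green_eq red_eq.
Qed.
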